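(* Let $G$ be a three-dimensional space group and $\mathbf{q}$ a point whose site-symmetry group $G_\mathbf{q}$ is maximal and isomorphic to one of the point groups $O$, $T_d$ or $O_h$ (the only crystallographic point groups with four-dimensional irreducible representations). Then there is no point $\mathbf{q}_0$ whose site-symmetry group $G_{\mathbf{q}_0}$ is a subgroup of index two in $G_\mathbf{q}$.
   Context: A space group $G$ is a group of affine isometries of $\mathbb{R}^3$ containing a Bravais lattice of translations. The site-symmetry group of a point $\mathbf{q}$ is $G_\mathbf{q}=\{g\in G:g\mathbf{q}=\mathbf{q}\}$; it is maximal if there is no finite group $H\neq G_\mathbf{q}$ with $G_\mathbf{q}\subset H\subset G$. *)

From HB Require Import structures.
From mathcomp Require Import all_boot all_order all_algebra.
From mathcomp Require Import reals.
Set Implicit Arguments. Unset Strict Implicit. Unset Printing Implicit Defensive.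
Import Order.TTheory GRing.Theory Num.Theory.
Local Open Scope ring_scope.

Section Defs.
Variable R : realType.

Definition aff := ('M[R]_3 * 'cV[R]_3)%type.

Definition act (g : aff) (x : 'cV[R]_3) : 'cV[R]_3 := g.1 *m x + g.2.

Definition comp (g h : aff) : aff := (g.1 *m h.1, g.1 *m h.2 + g.2).
Definition aff_id : aff := (1%:M, 0).
(* inverse of an isometry (A orthogonal) *)
Definition aff_inv (g : aff) : aff := (g.1^T, - (g.1^T *m g.2)).

Definition orthogonal_mx (A : 'M[R]_3) : Prop := A *m A^T = 1%:M.

Definition isom_group (H : aff -> Prop) : Prop :=
  [/\ forall g, H g -> orthogonal_mx g.1,
      H aff_id,
      forall g h, H g -> H h -> H (comp g h)
    & forall g, H g -> H (aff_inv g)].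

Definition finite_set (H : aff -> Prop) : Prop :=
  exists s : seq aff, forall g, H g -> g \in s.

Definition space_group (G : aff -> Prop) : Prop :=
  isom_group G /\
  exists B : 'M[R]_3, B \in unitmx /\
    forall t : 'cV[R]_3,
      G (1%:M, t) <-> exists v : 'cV[int]_3, t = B *m map_mx (fun z : int => z%:~R) v.

Definition site (G : aff -> Prop) (q : 'cV[R]_3) : aff -> Prop :=
  fun g => G g /\ act g q = q.

Definition maximal_site (G : aff -> Prop) (q : 'cV[R]_3) : Prop :=
  forall H : aff -> Prop, isom_group H -> finite_set H ->
    (forall g, site G q g -> H g) -> (forall g, H g -> G g) ->
    forall g, H g -> site G q g.

(* O_h : all signed permutation matrices *)
Definition Oh_group (M : 'M[R]_3) : Prop :=
  (forall i j, M i j = 0 \/ M i j = 1 \/ M i j = -1) /\ orthogonal_mx M.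
Definition O_group (M : 'M[R]_3) : Prop := Oh_group M /\ \det M = 1.
(* T_d : signed permutation matrices whose product of nonzero entries is 1 *)
Definition Td_group (M : 'M[R]_3) : Prop :=
  Oh_group M /\ \prod_(i < 3) (\sum_(j < 3) M i j) = 1.

Definition isomorphic (H : aff -> Prop) (P : 'M[R]_3 -> Prop) : Prop :=
  exists f : aff -> 'M[R]_3,
    [/\ forall g, H g -> P (f g),
        forall g h, H g -> H h -> f g = f h -> g = h,
        forall M, P M -> exists2 g, H g & f g = M
      & forall g h, H g -> H h -> f (comp g h) = f g *m f h].

Definition index_two_subgroup (K H : aff -> Prop) : Prop :=
  (forall g, K g -> H g) /\
  exists c, [/\ H c, ~ K c &
    forall g, H g -> K g \/ K (comp (aff_inv c) g)].

End Defs.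

From Pilot Require Import Defs.
From HB Require Import structures.
From mathcomp Require Import all_boot all_order all_algebra.
From mathcomp Require Import reals ring lra.
Set Implicit Arguments. Unset Strict Implicit. Unset Printing Implicit Defensive.
Import Order.TTheory GRing.Theory Num.Theory.
Local Open Scope ring_scope.

(* Let v = q0 - q.  Inside G_q the subgroup G_q0 is the stabiliser of v, so
   an index-two G_q0 means that v has an orbit {v, w} with w <> v; an element
   of order three must then fix v.  The rotations of order three of O, T_d and
   O_h have determinant one, so their preimages in G_q are rotations about the
   common axis v.  Such rotations commute with the cross-product matrix [v]x,
   which has a cyclic vector, hence they commute with each other -- whereas
   the rotations about (1,1,1) and (1,-1,-1) do not. *)

Section Centralizer.
Variables (R : comUnitRingType) (n' : nat).
Local Notation n := n'.+1.
Implicit Types A X Y : 'M[R]_n.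

Definition krylov_mx A (w : 'cV[R]_n) : 'M[R]_n := \matrix_(i, k) (A ^+ k *m w) i 0.

Lemma mulmx_krylov X A w :
  X *m krylov_mx A w = \matrix_(i, k) (X *m (A ^+ k *m w)) i 0.
Proof. by apply/matrixP => i k; rewrite !mxE; apply: eq_bigr => j _; rewrite mxE. Qed.

Lemma krylov_mulmx A w (c : 'cV[R]_n) :
  krylov_mx A w *m c = (\sum_(k < n) c k 0 *: A ^+ k) *m w.
Proof.
rewrite mulmx_suml; apply/colP => i; rewrite !mxE summxE.
by apply: eq_bigr => k _; rewrite -scalemxAl !mxE mulrC.
Qed.

Lemma centralizer_cyclic A X w :
  krylov_mx A w \in unitmx -> comm_mx A X -> exists p, X = horner_mx A p.
Proof.
move=> Kunit AX; set K := krylov_mx A w.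
exists (\sum_(k < n) (invmx K *m (X *m w)) k 0 *: 'X^k).
set P := horner_mx A _.
have PA : comm_mx P A by apply: comm_horner_mx.
have Pw : P *m w = X *m w.
  rewrite -[RHS](mulKVmx Kunit) krylov_mulmx /P linear_sum /=.
  by congr (_ *m w); apply: eq_bigr => k _; rewrite linearZ rmorphXn /= horner_mx_X.
(* X and P commute with A and agree on w, hence on every column A^k w of K. *)
have XK : X *m K = P *m K.
  rewrite !mulmx_krylov; apply/matrixP => i k; rewrite [LHS]mxE [RHS]mxE.
  have XAk : X *m A ^+ k = A ^+ k *m X := commrX k (esym AX).
  have PAk : P *m A ^+ k = A ^+ k *m P := commrX k PA.
  by rewrite !mulmxA XAk PAk -!mulmxA Pw.
by rewrite -[X](mulmxK Kunit) XK mulmxK.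
Qed.

Lemma centralizer_cyclic_comm A X Y w :
  krylov_mx A w \in unitmx -> comm_mx A X -> comm_mx A Y -> comm_mx X Y.
Proof.
move=> Kunit /(centralizer_cyclic Kunit) [p ->] /(centralizer_cyclic Kunit) [q ->].
exact: comm_horner_mx2.
Qed.

End Centralizer.

Definition dotmul (R : pzRingType) n (x y : 'cV[R]_n) : R := (x^T *m y) 0 0.

Lemma dotmulvv_eq0 (R : realDomainType) n (x : 'cV[R]_n) :
  (dotmul x x == 0) = (x == 0).
Proof.
apply/idP/eqP => [|->]; last by rewrite /dotmul mulmx0 mxE.
have sq j : 0 <= x^T 0 j * x j 0 by rewrite mxE -expr2 sqr_ge0.
rewrite /dotmul mxE => /eqP /(psumr_eq0P (fun j _ => sq j)) x0.
apply/colP => i; rewrite mxE; apply/eqP; rewrite -sqrf_eq0 expr2; apply/eqP.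
by have := x0 i isT; rewrite mxE.
Qed.

Local Notation i0 := (@Ordinal 3 0 isT).
Local Notation i1 := (@Ordinal 3 1 isT).
Local Notation i2 := (@Ordinal 3 2 isT).

Section Matrix3.
Variable R : comUnitRingType.
Implicit Types A M : 'M[R]_3.

Lemma ord3P (P : 'I_3 -> Prop) : P i0 -> P i1 -> P i2 -> forall i, P i.
Proof. by move=> ? ? ? [[|[|[|//]]] i3]; rewrite (bool_irrelevance i3 isT). Qed.

Lemma sum3E (F : 'I_3 -> R) : \sum_(i < 3) F i = F i0 + F i1 + F i2.
Proof.
rewrite !big_ord_recl big_ord0 addr0 addrA.
by congr (F _ + F _ + F _); apply: val_inj.
Qed.

Lemma mulmx3E m n (A : 'M[R]_(m, 3)) (B : 'M[R]_(3, n)) i j :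
  (A *m B) i j = A i i0 * B i0 j + A i i1 * B i1 j + A i i2 * B i2 j.
Proof. by rewrite mxE sum3E. Qed.

Lemma det_mx33 M : \det M =
  M i0 i0 * (M i1 i1 * M i2 i2 - M i1 i2 * M i2 i1)
  + M i0 i1 * (M i1 i2 * M i2 i0 - M i1 i0 * M i2 i2)
  + M i0 i2 * (M i1 i0 * M i2 i1 - M i1 i1 * M i2 i0).
Proof.
(* Indexing by nat identifies the ordinals produced by [lift] with i0, i1, i2. *)
pose a k l := M (inord k) (inord l).
have aE i j : M i j = a i j by rewrite /a !inord_val.
rewrite (expand_det_row _ ord0) sum3E /cofactor.
rewrite !(expand_det_row _ ord0) !big_ord_recl !big_ord0 /cofactor !det_mx11 !mxE.
by clearbody a; rewrite !aE /=; ring.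
Qed.

Definition mx3 (a b c d e f g h k : R) : 'M[R]_3 :=
  \matrix_(i, j) nth 0 (nth [::] [:: [:: a; b; c]; [:: d; e; f]; [:: g; h; k]] i) j.

Definition crossmx (v : 'cV[R]_3) : 'M[R]_3 :=
  let: (x, y, z) := (v i0 0, v i1 0, v i2 0) in
  mx3 0 (- z) y z 0 (- x) (- y) x 0.

(* The transposed adjugate, written out so that [ring] can handle it. *)
Definition cofmx M : 'M[R]_3 :=
  let c i j k l := M i j * M k l - M i l * M k j in
  mx3 (c i1 i1 i2 i2) (c i1 i2 i2 i0) (c i1 i0 i2 i1)
      (c i2 i1 i0 i2) (c i2 i2 i0 i0) (c i2 i0 i0 i1)
      (c i0 i1 i1 i2) (c i0 i2 i1 i0) (c i0 i0 i1 i1).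

Lemma crossmx_mulmx A x : crossmx (A *m x) *m A = cofmx A *m crossmx x.
Proof.
by apply/matrixP; apply: ord3P; apply: ord3P; rewrite !mulmx3E !mxE /= ?sum3E; ring.
Qed.

Lemma cofmx_mulmx A : (cofmx A)^T *m A = (\det A)%:M.
Proof.
by apply/matrixP; apply: ord3P; apply: ord3P; rewrite !mulmx3E !mxE /= det_mx33; ring.
Qed.

Lemma det_krylov_crossmx v w :
  \det (krylov_mx (crossmx v) w) =
  dotmul v w * (dotmul v v * dotmul w w - dotmul v w ^+ 2).
Proof.
have K0 i : krylov_mx (crossmx v) w i i0 = w i 0 by rewrite mxE expr0 -idmxE mul1mx.
have K1 i : krylov_mx (crossmx v) w i i1 = (crossmx v *m w) i 0 by rewrite mxE expr1.
have K2 i : krylov_mx (crossmx v) w i i2 = (crossmx v *m (crossmx v *m w)) i 0.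
  by rewrite mxE expr2 mulmxA.
by rewrite det_mx33 !K0 !K1 !K2 /dotmul !mulmx3E !mxE /=; ring.
Qed.

(* The i-th summand is |v|^4 |v x e_i|^2.  No single vector is cyclic for
   every nonzero v (hairy ball), hence the sum over three candidates. *)
Lemma crossmx_krylov_det_sum v :
  \sum_(i < 3) \det (krylov_mx (crossmx v) (v + col i (crossmx v)))
  = 2 * dotmul v v ^+ 3.
Proof. by rewrite sum3E !det_krylov_crossmx /dotmul !mulmx3E !mxE /=; ring. Qed.

End Matrix3.

Section Rotation.
Variable R : realFieldType.
Implicit Types A B : 'M[R]_3.

Lemma cofmx_orthogonal A : A *m A^T = 1%:M -> cofmx A = \det A *: A.
Proof.
move=> AAT; apply: trmx_inj; rewrite linearZ /= -[LHS]mulmx1 -AAT mulmxA.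
by rewrite cofmx_mulmx mul_scalar_mx.
Qed.

Lemma det_cube_eq1 A : A *m (A *m A) = 1%:M -> \det A = 1.
Proof.
move=> /(congr1 determinant); rewrite !det_mulmx det1; set d := \det A => d3.
have : (d - 1) * (d ^+ 2 + d + 1) = d * (d * d) - 1 by ring.
by rewrite d3 subrr => /eqP; rewrite mulf_eq0 => /orP[/eqP|/eqP]; nra.
Qed.

Lemma crossmx_comm_rotation A v :
  A *m A^T = 1%:M -> \det A = 1 -> A *m v = v -> comm_mx (crossmx v) A.
Proof.
move=> AAT detA Av; rewrite /comm_mx -{1}Av crossmx_mulmx cofmx_orthogonal //.
by rewrite detA scale1r.
Qed.

Lemma crossmx_cyclic (v : 'cV[R]_3) :
  v != 0 -> exists w, krylov_mx (crossmx v) w \in unitmx.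
Proof.
move=> v0; pose K i := krylov_mx (crossmx v) (v + col i (crossmx v)).
have : \sum_(i < 3) \det (K i) != 0.
  by rewrite crossmx_krylov_det_sum mulf_neq0 ?pnatr_eq0 // expf_neq0 ?dotmulvv_eq0.
case: (pickP (fun i => \det (K i) != 0)) => [i Ki _ | none].
  by exists (v + col i (crossmx v)); rewrite unitmxE unitfE.
by rewrite big1 ?eqxx // => i _; apply/eqP/negbFE/none.
Qed.

Lemma rotations_same_axis_comm A B (v : 'cV[R]_3) :
  v != 0 -> A *m A^T = 1%:M -> B *m B^T = 1%:M -> \det A = 1 -> \det B = 1 ->
  A *m v = v -> B *m v = v -> A *m B = B *m A.
Proof.
move=> v0 AAT BBT detA detB Av Bv; have [w Kw] := crossmx_cyclic v0.
by apply: centralizer_cyclic_comm Kw _ _; apply: crossmx_comm_rotation.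
Qed.

End Rotation.

Lemma fixed_of_order3 (T : Type) (f : T -> T) x y : injective f ->
  f (f (f x)) = x -> f x = x \/ f x = y -> f (f x) = x \/ f (f x) = y -> f x = x.
Proof.
move=> finj f3 [//|fx] [ffx | ffy]; first by rewrite -{2}f3 ffx.
by apply: finj; rewrite ffy fx.
Qed.

Section SiteSymmetry.
Variables (R : realType) (G : aff R -> Prop).
Hypothesis isoG : isom_group G.
Implicit Types (g h : aff R) (p q : 'cV[R]_3).

Lemma site_id q : site G q (aff_id R).
Proof. by case: isoG => _ Gid _ _; split; rewrite // /act mul1mx addr0. Qed.

Lemma site_comp q g h : site G q g -> site G q h -> site G q (Defs.comp g h).
Proof.
case: isoG => _ _ Gcomp _ [Gg gq] [Gh hq]; split; first exact: Gcomp.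
by move: gq hq; rewrite /act /= => gq hq; rewrite -mulmxA addrA -mulmxDr hq.
Qed.

Lemma site_orthogonal q g : site G q g -> g.1 *m g.1^T = 1%:M.
Proof. by case: isoG => Gorth _ _ _ [/Gorth]. Qed.

Lemma site_translation q g : site G q g -> g.2 = q - g.1 *m q.
Proof. by case=> _ gq; rewrite -{1}gq /act addrC addKr. Qed.

Lemma site_eq q g h : site G q g -> site G q h -> g.1 = h.1 -> g = h.
Proof.
move=> /site_translation gt /site_translation ht e.
by rewrite [g]surjective_pairing [h]surjective_pairing gt ht e.
Qed.

Lemma site_fixE q p g : site G q g -> site G p g <-> g.1 *m (p - q) = p - q.
Proof.
move=> Hg; have -> : g.1 *m (p - q) = act g p - q.
  by rewrite /act (site_translation Hg) mulmxBr; apply/matrixP => i j; rewrite !mxE; ring.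
split=> [[_ ->] // | /eqP]; rewrite (inj_eq (addIr _)) => /eqP gp.
by split=> //; case: Hg.
Qed.

Section IndexTwo.
Variables q q0 : 'cV[R]_3.
Hypothesis idx : index_two_subgroup (site G q0) (site G q).

Lemma index_two_site_neq : q0 != q.
Proof. by case: idx => _ [c [Hc Kc _]]; apply/eqP => e; apply: Kc; rewrite e. Qed.

Lemma index_two_site_orbit : exists w, forall g, site G q g ->
  g.1 *m (q0 - q) = q0 - q \/ g.1 *m (q0 - q) = w.
Proof.
case: idx => KH [c [Hc _ cover]]; exists (c.1 *m (q0 - q)) => g Hg.
have [Kg | Kcg] := cover g Hg; [left | right]; first exact/(site_fixE _ Hg).
have := (site_fixE _ (KH _ Kcg)).1 Kcg; rewrite /= -mulmxA => e.
by rewrite -{2}e mulmxA (site_orthogonal Hc) mul1mx.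
Qed.

Lemma site_order3_fix g : site G q g -> g.1 *m (g.1 *m g.1) = 1%:M ->
  g.1 *m (q0 - q) = q0 - q.
Proof.
move=> Hg g3; have [w orbit] := index_two_site_orbit.
apply: (fixed_of_order3 (f := @mulmx _ 3 3 1 g.1) (y := w)).
- apply: (can_inj (g := mulmx g.1^T)) => x.
  by rewrite mulmxA (mulmx1C (site_orthogonal Hg)) mul1mx.
- by rewrite !mulmxA -(mulmxA g.1) g3 mul1mx.
- exact: orbit.
- by rewrite mulmxA; apply: (orbit (Defs.comp g g)); apply: site_comp.
Qed.

End IndexTwo.
End SiteSymmetry.

Section Isomorphism.
Variables (R : realType) (H : aff R -> Prop) (P : 'M[R]_3 -> Prop).
Variable f : aff R -> 'M[R]_3.
Hypotheses (H1 : H (aff_id R)) (HM : forall g h, H g -> H h -> H (Defs.comp g h)).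
Hypothesis Punit : forall M, P M -> M \in unitmx.
Hypotheses (fP : forall g, H g -> P (f g))
  (finj : forall g h, H g -> H h -> f g = f h -> g = h)
  (fM : forall g h, H g -> H h -> f (Defs.comp g h) = f g *m f h).

Lemma iso_id : f (aff_id R) = 1%:M.
Proof.
have idid : Defs.comp (aff_id R) (aff_id R) = aff_id R.
  by rewrite /Defs.comp /= mul1mx mulmx0 addr0.
have := fM H1 H1; rewrite idid => e.
have U := Punit (fP H1).
by rewrite -(mulmxV U) {2}e -mulmxA mulmxV // mulmx1.
Qed.

Lemma iso_order3 g : H g -> f g *m (f g *m f g) = 1%:M ->
  Defs.comp g (Defs.comp g g) = aff_id R.
Proof.
move=> Hg fg3; have Hgg := HM Hg Hg.
by apply: finj (HM Hg Hgg) H1 _; rewrite fM // fM // fg3 iso_id.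
Qed.

End Isomorphism.

Section CubicRotations.
Variable R : realType.

Definition rot_111 : 'M[R]_3 := mx3 0 0 1 1 0 0 0 1 0.
Definition rot_1nn : 'M[R]_3 := mx3 0 0 (-1) (-1) 0 0 0 1 0.

Lemma rot_111_order3 : rot_111 *m (rot_111 *m rot_111) = 1%:M.
Proof. by apply/matrixP; apply: ord3P; apply: ord3P; rewrite !mulmx3E !mxE /=; ring. Qed.

Lemma rot_1nn_order3 : rot_1nn *m (rot_1nn *m rot_1nn) = 1%:M.
Proof. by apply/matrixP; apply: ord3P; apply: ord3P; rewrite !mulmx3E !mxE /=; ring. Qed.

Lemma rot_111_1nn_noncomm : rot_111 *m rot_1nn <> rot_1nn *m rot_111.
Proof. by move=> /matrixP /(_ i0 i1); rewrite !mulmx3E !mxE /=; lra. Qed.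

Lemma cubic_rot_point_groups M : M = rot_111 \/ M = rot_1nn ->
  [/\ O_group M, Td_group M & Oh_group M].
Proof.
move=> hM; have M3 : M *m (M *m M) = 1%:M.
  by case: hM => ->; [exact: rot_111_order3 | exact: rot_1nn_order3].
have MMT : M *m M^T = 1%:M.
  by case: hM => ->; apply/matrixP; apply: ord3P; apply: ord3P; rewrite !mulmx3E !mxE /=; ring.
have entries i j : M i j = 0 \/ M i j = 1 \/ M i j = -1.
  case: hM => ->; move: i j; apply: ord3P; apply: ord3P; rewrite mxE /=;
  by [left | right; left | right; right].
have rowsums : \prod_(i < 3) \sum_(j < 3) M i j = 1.
  by case: hM => ->; rewrite !big_ord_recl !big_ord0 !mxE /=; ring.
by split; split=> //; exact: det_cube_eq1.
Qed.

End CubicRotations.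

Arguments rot_111 {R}.
Arguments rot_1nn {R}.

Lemma no_index_two_site (R : realType) (G : aff R -> Prop) (q q0 : 'cV[R]_3)
    (P : 'M[R]_3 -> Prop) :
  isom_group G -> (forall M, P M -> M \in unitmx) -> P rot_111 -> P rot_1nn ->
  isomorphic (site G q) P -> ~ index_two_subgroup (site G q0) (site G q).
Proof.
move=> isoG Punit P111 P1nn [f [fP finj fsurj fM]] idx.
have v0 : q0 - q != 0 by rewrite subr_eq0 (index_two_site_neq idx).
have rotation g : site G q g -> f g *m (f g *m f g) = 1%:M ->
    g.1 *m (q0 - q) = q0 - q /\ \det g.1 = 1.
  move=> Hg /(iso_order3 (site_id isoG q) (@site_comp _ _ isoG q) Punit fP finj fM Hg).
  move=> /(congr1 fst) /= g3; split; last exact: det_cube_eq1 g3.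
  exact (site_order3_fix isoG idx Hg g3).
have [a Ha fa] := fsurj _ P111; have [b Hb fb] := fsurj _ P1nn.
have [av deta] : a.1 *m (q0 - q) = q0 - q /\ \det a.1 = 1.
  by apply: rotation Ha _; rewrite fa rot_111_order3.
have [bv detb] : b.1 *m (q0 - q) = q0 - q /\ \det b.1 = 1.
  by apply: rotation Hb _; rewrite fb rot_1nn_order3.
have ab := rotations_same_axis_comm v0 (site_orthogonal isoG Ha)
  (site_orthogonal isoG Hb) deta detb av bv.
apply: (@rot_111_1nn_noncomm R); rewrite -fa -fb -!fM //; congr f.
exact: site_eq (site_comp isoG Ha Hb) (site_comp isoG Hb Ha) ab.
Qed.

Theorem mainTheorem6 (R : realType) (G : aff R -> Prop) (q : 'cV[R]_3) :
  space_group G ->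
  maximal_site G q ->
  (isomorphic (site G q) (@O_group R) \/
   isomorphic (site G q) (@Td_group R) \/
   isomorphic (site G q) (@Oh_group R)) ->
  ~ exists q0 : 'cV[R]_3, index_two_subgroup (site G q0) (site G q).
Proof.
move=> [isoG _] _ iso [q0].
have [O111 Td111 Oh111] := @cubic_rot_point_groups R _ (or_introl erefl).
have [O1nn Td1nn Oh1nn] := @cubic_rot_point_groups R _ (or_intror erefl).
have Oh_unit M : Oh_group M -> M \in unitmx by case=> _ /mulmx1_unit [].
case: iso => [|[|]] iso; apply: (no_index_two_site isoG _ _ _ iso) => // M.
- by case=> /Oh_unit.
- by case=> /Oh_unit.
- exact: Oh_unit.
Qed.
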